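(* Let $\gamma\in(1,2]$, $\delta>0$. Assume that $f$ is convex and $L$-smooth relative to $d$ on $Q$, that $V$ satisfies the triangular scaling property with scaling factor $\gamma$, and that for every $y\in Q$ the pair $(f_\delta(y),\nabla f_\delta(y))$ is a $(\delta,L)$-oracle of $f$ at $y$. Consider the scheme AccBPGM-2 below with $\theta_k=\frac{\gamma}{k+\gamma}$ for all $k\ge0$, and suppose the constants $L_{k+1}$ satisfy, for every $k\ge0$: $L_{k+2}\ge L_{k+1}$, $L_{k+1}\ge(\theta_{k+1}/\theta_k)^{\gamma}$, $f(x_{k+1})\le g(x_{k+1}|y_k)+L_{k+1}V(x_{k+1},y_k)+\delta$, and $L_{k+1}<2L$. Let $x_*$ be a minimizer of $f$ on $Q$. Then for every $N\ge1$, $$f(x_N)-f(x_* )\le2L\Big(\frac{\gamma}{\gamma+N-1}\Big)^{\gamma}V(x_*,x_0)+\big(2(N-1)L+1\big)\delta.$$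
   Context: Setting. $\mathbb{E}$ is a finite-dimensional real vector space with a norm $\|\cdot\|$ and dual space $\mathbb{E}^*$; $\langle g,x\rangle$ denotes the value of $g\in\mathbb{E}^*$ at $x\in\mathbb{E}$. $Q\subset\mathbb{E}$ is a closed convex set. $f:Q\to\mathbb{R}$ is convex and differentiable on an open set containing the relative interior $\mathrm{rint}\,Q$. The prox-function $d:Q\to\mathbb{R}$ is continuously differentiable and $1$-strongly convex with respect to $\|\cdot\|$. The Bregman divergence is $V(x,y)=d(x)-d(y)-\langle\nabla d(y),x-y\rangle$. All minimization subproblems appearing in the algorithms are assumed to have minimizers. Relative smoothness: $f$ is $L$-smooth relative to $d$ on $Q$ if $f(y)\le f(x)+\langle\nabla f(x),y-x\rangle+LV(y,x)$ for all $x\in\mathrm{rint}\,Q$, $y\in Q$. Triangular scaling property with factor $\gamma>0$: $V((1-\theta)x+\theta z,(1-\theta)x+\theta\tilde z)\le\theta^{\gamma}V(z,\tilde z)$ for all $x,z,\tilde z\in Q$ and all $\theta\in[0,1]$. $(\delta,L)$-oracle: a pair $(f_\delta(y),\nabla f_\delta(y))\in\mathbb{R}\times\mathbb{E}^*$ is a $(\delta,L)$-oracle of $f$ at $y$ if $0\le f(x)-\big(f_\delta(y)+\langle\nabla f_\delta(y),x-y\rangle\big)\le LV(x,y)+\delta$ for all $x\in Q$. Notation: $g(x|y):=f_\delta(y)+\langle\nabla f_\delta(y),x-y\rangle$. Scheme AccBPGM-2 (adaptive version). Input: $x_0\in\mathrm{rint}\,Q$, $\gamma\in(1,2]$, $\delta>0$.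 Set $z_0=x_0$, $\theta_0=1$. For $k=0,1,2,\dots$: a constant $L_{k+1}>0$ is chosen, and $y_k=(1-\theta_k)x_k+\theta_kz_k$; $z_{k+1}=\arg\min_{z\in Q}\{g(z|y_k)+\theta_k^{\gamma-1}L_{k+1}V(z,z_k)\}$; $x_{k+1}=(1-\theta_k)x_k+\theta_kz_{k+1}$. *)

(* E = 'rV[R]_n (finite-dimensional real vector space),
   E^* identified with 'rV[R]_n via the pairing <g,x> = \sum_i g_i x_i. *)
From HB Require Import structures.
From mathcomp Require Import all_boot all_order all_algebra.
From mathcomp Require Import all_classical all_reals all_analysis.
Set Implicit Arguments. Unset Strict Implicit. Unset Printing Implicit Defensive.
Import Order.TTheory GRing.Theory Num.Theory.
Import numFieldNormedType.Exports.
Local Open Scope classical_set_scope.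
Local Open Scope ring_scope.

Section Defs.
Variables (R : realType) (n : nat).
Notation E := 'rV[R]_n.

Definition pairing (g x : E) : R := (g *m x^T) 0 0.

Definition is_norm (nrm : E -> R) : Prop :=
  [/\ forall x y, nrm (x + y) <= nrm x + nrm y,
      forall (a : R) x, nrm (a *: x) = `|a| * nrm x
    & forall x, nrm x = 0 -> x = 0].

Definition pc_convex_set (Q : set E) : Prop :=
  forall x y (t : R), Q x -> Q y -> 0 <= t <= 1 -> Q ((1 - t) *: x + t *: y).

Definition pc_convex_fun (Q : set E) (f : E -> R) : Prop :=
  forall x y (t : R), Q x -> Q y -> 0 <= t <= 1 ->
    f ((1 - t) *: x + t *: y) <= (1 - t) * f x + t * f y.

Definition pc_strongly_convex1 (nrm : E -> R) (Q : set E) (d : E -> R) : Prop :=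
  forall x y (t : R), Q x -> Q y -> 0 <= t <= 1 ->
    d ((1 - t) *: x + t *: y) <=
      (1 - t) * d x + t * d y - t * (1 - t) / 2 * (nrm (x - y)) ^+ 2.

Definition aff_hull (Q : set E) : set E :=
  [set x | exists s : seq (R * E),
     [/\ forall p, p \in s -> Q p.2,
         \sum_(p <- s) p.1 = 1
       & x = \sum_(p <- s) p.1 *: p.2]].

Definition rint (Q : set E) : set E :=
  [set x | Q x /\ exists2 e : R, 0 < e & forall y, aff_hull Q y -> ball x e y -> Q y].

Definition bregman (d : E -> R) (x y : E) : R := d x - d y - 'd d y (x - y).

End Defs.

From HB Require Import structures.
From mathcomp Require Import all_boot all_order all_algebra.
From mathcomp Require Import all_classical all_reals all_analysis.
From mathcomp Require Import ring lra.
Import Order.TTheory GRing.Theory Num.Theory.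
Import numFieldNormedType.Exports.
Local Open Scope classical_set_scope.
Local Open Scope ring_scope.
Set Implicit Arguments. Unset Strict Implicit.

(* With [E_k = f x_k - f x_*], [V_k = V(x_*, z_k)] and the weights
   [w_k = theta_k^gamma L_(k+1)], the lower oracle bound, the affinity of the
   model [g], triangular scaling and the three-point property of the Bregman
   proximal step give
     [E_(k+1) <= (1 - theta_k) E_k + w_k (V_k - V_(k+1)) + delta].
   Bernoulli's inequality gives [(1 - theta_(k+1)) w_k <= w_(k+1)], so the
   estimate telescopes into [E_(m+1) <= w_m (V_0 + delta sum_(i<=m) 1/w_i)],
   and [w_m <= 2 L w_i] follows from [theta_(i+1)^gamma <= L_(i+1) theta_i^gamma]
   and [L_(m+1) < 2 L]. *)

Lemma bernoulli_powR (R : realType) (s p : R) :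
  0 <= s -> 1 < p -> 1 + p * (s - 1) <= s `^ p.
Proof.
move=> s0 p1.
have p0 : 0 < p by lra.
have pn0 : p != 0 by rewrite gt_eqF.
have p1n0 : p - 1 != 0 by rewrite gt_eqF // subr_gt0.
have q0 : 0 < p / (p - 1) by rewrite divr_gt0 // subr_gt0.
have conj : p^-1 + (p / (p - 1))^-1 = 1 by rewrite invf_div; field.
have := conjugate_powR s0 ler01 p0 q0 conj.
rewrite powR1 mulr1 div1r invf_div => young.
have -> : s `^ p = p * (s `^ p / p + (p - 1) / p) - (p - 1) by field.
have : p * s <= p * (s `^ p / p + (p - 1) / p) by rewrite ler_pM2l.
lra.
Qed.

Section Bregman.
Variables (R : realType) (n : nat).
Notation E := 'rV[R]_n.

Lemma diff_right_quotient_cvg (d : E -> R) (u v : E) : differentiable d u ->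
  (fun t : R => t^-1 * (d (u + t *: v) - d u)) @ 0^'+ --> 'd d u v.
Proof.
move=> du; rewrite -deriveE //.
have /cvg_ex[l dl] := @diff_derivable _ _ _ _ _ v du.
rewrite /derive (cvg_lim _ dl) //.
apply: cvg_trans (cvg_dnbhs_at_right dl); apply: near_eq_cvg; near=> t.
by rewrite /= (addrC (t *: v)).
Unshelve. all: by end_near.
Qed.

Definition is_affine (h : E -> R) : Prop :=
  forall a b (t : R), h ((1 - t) *: a + t *: b) = (1 - t) * h a + t * h b.

Lemma pairingD (p a b : E) : pairing p (a + b) = pairing p a + pairing p b.
Proof. by rewrite /pairing linearD mulmxDr mxE. Qed.

Lemma pairingZ (p a : E) (t : R) : pairing p (t *: a) = t * pairing p a.
Proof. by rewrite /pairing linearZ /= -scalemxAr mxE. Qed.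

Lemma pairingN (p a : E) : pairing p (- a) = - pairing p a.
Proof. by rewrite -scaleN1r pairingZ mulN1r. Qed.

Lemma affine_pairing (c : R) (p u : E) : is_affine (fun w => c + pairing p (w - u)).
Proof. by move=> a b t; rewrite !pairingD !pairingN !pairingZ; ring. Qed.

Lemma convex_combE (a b : E) (t : R) : (1 - t) *: a + t *: b = a + t *: (b - a).
Proof. by rewrite scalerBr scalerBl scale1r addrAC addrA. Qed.

Lemma strongly_convex1_convex (nrm : E -> R) (Q : set E) (d : E -> R) :
  pc_strongly_convex1 nrm Q d -> pc_convex_fun Q d.
Proof.
move=> sc u w t Qu Qw /andP[t0 t1]; apply: (le_trans (sc u w t Qu Qw _)).
  by rewrite t0 t1.
rewrite lerBlDr lerDl mulr_ge0 ?sqr_ge0 // divr_ge0 // mulr_ge0 //; lra.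
Qed.

(* The Bregman lemmas are proved
   for an abstract derivative [D]: goals holding two distinct ['d d u a] and
   ['d d v b] make rewriting and [lra] compare them by unfolding [diff], which
   does not terminate in practice. *)
Definition bregman_of (d : E -> R) (D : E -> E -> R) (x y : E) : R :=
  d x - d y - D y (x - y).

Section BregmanOf.
Variables (Q : set E) (d : E -> R) (D : E -> E -> R).
Hypotheses (DD : forall u a b, D u (a + b) = D u a + D u b)
  (DZ : forall u (t : R) a, D u (t *: a) = t * D u a)
  (D_quotient : forall u v, Q u ->
     (fun t : R => t^-1 * (d (u + t *: v) - d u)) @ 0^'+ --> D u v).

Lemma dir_le_of_quotient_le (u v : E) (B : R) : Q u ->
  (forall t : R, 0 < t <= 1 -> d (u + t *: v) - d u <= t * B) -> D u v <= B.
Proof.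
move=> Qu incr; have cv := @D_quotient u v Qu.
apply: (cvgr_to_le cv); near=> t.
have t0 : 0 < t by near: t; exact: nbhs_right_gt.
have t1 : t <= 1 by near: t; apply: nbhs_right_le; exact: ltr01.
by rewrite ler_pdivrMl // incr ?t0.
Unshelve. all: by end_near.
Qed.

Lemma dir_ge_of_quotient_ge (u v : E) (B : R) : Q u ->
  (forall t : R, 0 < t <= 1 -> t * B <= d (u + t *: v) - d u) -> B <= D u v.
Proof.
move=> Qu incr; have cv := @D_quotient u v Qu.
apply: (cvgr_to_ge cv); near=> t.
have t0 : 0 < t by near: t; exact: nbhs_right_gt.
have t1 : t <= 1 by near: t; apply: nbhs_right_le; exact: ltr01.
by rewrite ler_pdivlMl // incr ?t0.
Unshelve. all: by end_near.
Qed.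

Lemma bregman_of_ge0 (u w : E) :
  pc_convex_fun Q d -> Q u -> Q w -> 0 <= bregman_of d D w u.
Proof.
move=> cvx Qu Qw; rewrite /bregman_of subr_ge0.
apply: dir_le_of_quotient_le => // t /andP[t0 t1].
have := cvx u w t Qu Qw; rewrite (ltW t0) t1 convex_combE => /(_ isT); lra.
Qed.

Lemma bregman_of_three_point (u v w : E) :
  bregman_of d D w u
  = bregman_of d D w v + bregman_of d D v u + D v (w - v) - D u (w - v).
Proof.
have wu : w - u = (w - v) + (v - u) by rewrite addrA subrK.
by rewrite /bregman_of wu DD; ring.
Qed.

Section Prox.
Variables (h : E -> R) (c : R) (zk z' : E).
Hypotheses (convQ : pc_convex_set Q) (h_affine : is_affine h) (c_gt0 : 0 < c)
  (Qz' : Q z')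
  (z'_min : forall w, Q w ->
     h z' + c * bregman_of d D z' zk <= h w + c * bregman_of d D w zk).

Lemma bregman_of_prox_optimality (w : E) : Q w ->
  c * D zk (w - z') - (h w - h z') <= c * D z' (w - z').
Proof.
move=> Qw.
have -> : c * D zk (w - z') - (h w - h z')
    = c * (D zk (w - z') - (h w - h z') / c) by field; rewrite gt_eqF.
rewrite ler_pM2l //; apply: dir_ge_of_quotient_ge => // t /andP[t0 t1].
have Qwt : Q ((1 - t) *: z' + t *: w) by apply: convQ; rewrite ?(ltW t0).
have := z'_min Qwt; rewrite h_affine /bregman_of !convex_combE.
have -> : z' + t *: (w - z') - zk = (z' - zk) + t *: (w - z') by rewrite addrAC.
rewrite (DD zk (z' - zk)) DZ => ineq; rewrite -(ler_pM2l c_gt0).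
have -> : c * (t * (D zk (w - z') - (h w - h z') / c))
    = t * (c * D zk (w - z')) - t * (h w - h z') by field; rewrite gt_eqF.
lra.
Qed.

Lemma bregman_of_prox_three_point (w : E) : Q w ->
  h z' + c * bregman_of d D z' zk + c * bregman_of d D w z'
  <= h w + c * bregman_of d D w zk.
Proof.
move=> Qw; have opt := bregman_of_prox_optimality Qw.
rewrite (bregman_of_three_point zk z' w) !mulrDr; lra.
Qed.

End Prox.
End BregmanOf.

Lemma bregman_ge0 (Q : set E) (d : E -> R) (u w : E) :
  pc_convex_fun Q d -> (forall v, Q v -> differentiable d v) ->
  Q u -> Q w -> 0 <= bregman d w u.
Proof.
move=> cvx dQ; apply: (bregman_of_ge0 (D := fun u v => 'd d u v)) => // v a Qv.
exact: diff_right_quotient_cvg (dQ v Qv).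
Qed.

Lemma bregman_prox_three_point (Q : set E) (d h : E -> R) (c : R) (zk z' : E) :
  pc_convex_set Q -> (forall v, Q v -> differentiable d v) ->
  is_affine h -> 0 < c -> Q z' ->
  (forall w, Q w -> h z' + c * bregman d z' zk <= h w + c * bregman d w zk) ->
  forall w, Q w -> h z' + c * bregman d z' zk + c * bregman d w z'
                   <= h w + c * bregman d w zk.
Proof.
move=> convQ dQ h_aff c0 Qz' z'_min w Qw.
apply: (bregman_of_prox_three_point (D := fun u v => 'd d u v) (Q := Q)) => //.
- by move=> v a b; exact: linearD.
- by move=> v t a; exact: linearZ.
- by move=> v a Qv; exact: diff_right_quotient_cvg (dQ v Qv).
Qed.

End Bregman.

Definition acc_theta (R : realType) (gamma : R) (k : nat) : R := gamma / (k%:R + gamma).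

Section AccTheta.
Variables (R : realType) (gamma : R).
Hypothesis gamma_gt1 : 1 < gamma.
Local Notation theta := (acc_theta gamma).

Let gamma_gt0 : 0 < gamma. Proof. exact: lt_trans ltr01 gamma_gt1. Qed.

Let shift_gt0 (k : nat) : 0 < k%:R + gamma. Proof. by rewrite ltr_wpDl. Qed.

Lemma acc_theta_gt0 k : 0 < theta k.
Proof. by rewrite divr_gt0. Qed.

Lemma acc_theta_le1 k : theta k <= 1.
Proof. by rewrite ler_pdivrMr // mul1r lerDr. Qed.

Lemma acc_theta0 : theta 0%N = 1.
Proof. by rewrite /acc_theta add0r divff // gt_eqF. Qed.

Lemma acc_theta_le (m k : nat) : (m <= k)%N -> theta k <= theta m.
Proof.
by move=> mk; rewrite ler_pM2l // lef_pV2 ?posrE // lerD2r ler_nat.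
Qed.

(* Bernoulli's inequality for the ratio [r = theta k.+1 / theta k], as
   [1 - theta k.+1 = 1 + gamma * (r - 1)]. *)
Lemma acc_theta_powR_succ k :
  (1 - theta k.+1) * theta k `^ gamma <= theta k.+1 `^ gamma.
Proof.
set r := (k%:R + gamma) / (k.+1%:R + gamma).
have kg0 := shift_gt0 k; have kg1 := shift_gt0 k.+1.
have r0 : 0 <= r by rewrite divr_ge0 // ltW.
have theta_succ : theta k.+1 = theta k * r.
  by rewrite /acc_theta /r; field; rewrite ?nat1r !gt_eqF ?shift_gt0.
have bern : 1 - theta k.+1 <= r `^ gamma.
  have -> : 1 - theta k.+1 = 1 + gamma * (r - 1).
    by rewrite /acc_theta /r -natr1; field; rewrite ?nat1r ?natr1 !gt_eqF ?shift_gt0.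
  exact: bernoulli_powR.
rewrite [in X in _ <= X]theta_succ powRM ?(ltW (acc_theta_gt0 k)) //.
by rewrite mulrC ler_wpM2l ?powR_ge0.
Qed.

Lemma acc_weight_succ k (L L' : R) : 0 <= L <= L' ->
  (1 - theta k.+1) * (theta k `^ gamma * L) <= theta k.+1 `^ gamma * L'.
Proof.
move=> /andP[L0 LL']; rewrite mulrA.
by rewrite (le_trans (ler_wpM2r L0 (acc_theta_powR_succ k))) // ler_wpM2l ?powR_ge0.
Qed.

Lemma acc_weight_le (i m : nat) (Li Lm C : R) : (i < m)%N ->
  (theta i.+1 / theta i) `^ gamma <= Li -> 0 <= Lm <= C ->
  theta m `^ gamma * Lm <= C * (theta i `^ gamma * Li).
Proof.
move=> im ratio /andP[Lm0 LmC].
have ti := acc_theta_gt0 i; have ti1 := acc_theta_gt0 i.+1.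
have theta_m_le : theta m `^ gamma <= theta i.+1 `^ gamma.
  apply: (ge0_ler_powR (ltW gamma_gt0)); last exact: acc_theta_le.
    by rewrite nnegrE ltW ?acc_theta_gt0.
  by rewrite nnegrE ltW.
have := @powRM R _ _ gamma (divr_ge0 (ltW ti1) (ltW ti)) (ltW ti).
rewrite divfK ?gt_eqF // => split_pow.
rewrite split_pow in theta_m_le.
have pow_le : theta m `^ gamma <= Li * theta i `^ gamma.
  by apply: (le_trans theta_m_le); rewrite ler_wpM2r ?powR_ge0.
by rewrite mulrC [X in _ <= _ * X]mulrC; apply: ler_pM; rewrite ?powR_ge0.
Qed.

End AccTheta.

Section AccRecursion.
Variables (R : realType) (E V w theta : nat -> R) (delta : R).
Hypotheses (theta0 : theta 0%N = 1) (theta_le1 : forall k, theta k <= 1)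
  (w_gt0 : forall k, 0 < w k) (E_ge0 : forall k, 0 <= E k)
  (step : forall k, E k.+1 <= (1 - theta k) * E k + w k * (V k - V k.+1) + delta)
  (w_succ : forall k, (1 - theta k.+1) * w k <= w k.+1).

Lemma acc_unroll m :
  E m.+1 <= w m * (V 0%N - V m.+1 + delta * \sum_(i < m.+1) (w i)^-1).
Proof.
elim: m => [|m IH].
  have := step 0; rewrite theta0 subrr mul0r add0r big_ord1.
  have -> : w 0%N * (V 0%N - V 1%N + delta * (w 0%N)^-1)
      = w 0%N * (V 0%N - V 1%N) + delta by field; rewrite gt_eqF.
  by [].
set S := \sum_(i < m.+1) (w i)^-1.
have bound_ge0 : 0 <= V 0%N - V m.+1 + delta * S.
  by have := le_trans (E_ge0 m.+1) IH; rewrite pmulr_rge0.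
have t0 : 0 <= 1 - theta m.+1 by rewrite subr_ge0.
have IH' : (1 - theta m.+1) * E m.+1
    <= (1 - theta m.+1) * (w m * (V 0%N - V m.+1 + delta * S)) by rewrite ler_wpM2l.
have w_le : (1 - theta m.+1) * (w m * (V 0%N - V m.+1 + delta * S))
    <= w m.+1 * (V 0%N - V m.+1 + delta * S) by rewrite mulrA ler_wpM2r.
have := step m.+1; rewrite big_ord_recr /= -/S.
have -> : w m.+1 * (V 0%N - V m.+2 + delta * (S + (w m.+1)^-1))
    = w m.+1 * (V 0%N - V m.+1 + delta * S) + w m.+1 * (V m.+1 - V m.+2) + delta.
  by field; rewrite gt_eqF.
lra.
Qed.

Lemma acc_rate m (C : R) : 0 <= delta -> (forall k, 0 <= V k) ->
  (forall i, (i < m)%N -> w m <= C * w i) ->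
  E m.+1 <= w m * V 0%N + (m%:R * C + 1) * delta.
Proof.
move=> delta0 V_ge0 w_ratio.
set S := \sum_(i < m.+1) (w i)^-1.
have wS : w m * S <= m%:R * C + 1.
  rewrite /S big_ord_recr /= mulrDr mulfV ?gt_eqF // lerD2r mulr_sumr.
  have -> : m%:R * C = \sum_(i < m) C by rewrite sumr_const card_ord mulr_natl.
  apply: ler_sum => i _; rewrite ler_pdivrMr //.
  exact: w_ratio (ltn_ord i).
have wV : 0 <= w m * V m.+1 by rewrite mulr_ge0 // ltW.
have dS : delta * (w m * S) <= delta * (m%:R * C + 1) by rewrite ler_wpM2l.
have := acc_unroll m; rewrite -/S; lra.
Qed.

End AccRecursion.

Section AccBPGM2.
Variables (R : realType) (n : nat).
Notation E := 'rV[R]_n.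
Variables (Q : set E) (f : E -> R) (g V : E -> E -> R) (L gamma delta : R)
  (Ls : nat -> R) (x y z : nat -> E) (xstar : E).
Local Notation theta := (acc_theta gamma).
Hypotheses (convQ : pc_convex_set Q)
  (V_ge0 : forall u w, Q u -> Q w -> 0 <= V w u)
  (V_scaling : forall u w w' (t : R), Q u -> Q w -> Q w' -> 0 <= t <= 1 ->
     V ((1 - t) *: u + t *: w) ((1 - t) *: u + t *: w') <= t `^ gamma * V w w')
  (V_prox : forall (h : E -> R) (c : R) (zk z' : E),
     is_affine h -> 0 < c -> Q z' ->
     (forall w, Q w -> h z' + c * V z' zk <= h w + c * V w zk) ->
     forall w, Q w -> h z' + c * V z' zk + c * V w z' <= h w + c * V w zk)
  (g_affine : forall u, is_affine (g ^~ u))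
  (g_le_f : forall u w, Q u -> Q w -> g w u <= f w)
  (gamma_gt1 : 1 < gamma) (delta_ge0 : 0 <= delta)
  (Qx0 : Q (x 0%N)) (z0 : z 0%N = x 0%N)
  (y_def : forall k, y k = (1 - theta k) *: x k + theta k *: z k)
  (z_step : forall k, Q (z k.+1) /\ forall w, Q w ->
     g (z k.+1) (y k) + theta k `^ (gamma - 1) * Ls k.+1 * V (z k.+1) (z k)
     <= g w (y k) + theta k `^ (gamma - 1) * Ls k.+1 * V w (z k))
  (x_def : forall k, x k.+1 = (1 - theta k) *: x k + theta k *: z k.+1)
  (Ls_gt0 : forall k, 0 < Ls k.+1) (Ls_mono : forall k, Ls k.+1 <= Ls k.+2)
  (Ls_ratio : forall k, (theta k.+1 / theta k) `^ gamma <= Ls k.+1)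
  (Ls_lt : forall k, Ls k.+1 < 2 * L)
  (descent : forall k,
     f (x k.+1) <= g (x k.+1) (y k) + Ls k.+1 * V (x k.+1) (y k) + delta)
  (Qxstar : Q xstar) (xstar_min : forall w, Q w -> f xstar <= f w).

Let theta_gt0 k : 0 < theta k. Proof. exact: acc_theta_gt0. Qed.

Let theta01 k : 0 <= theta k <= 1.
Proof. by rewrite ltW ?theta_gt0 ?acc_theta_le1. Qed.

Lemma accbpgm2_in_Q k : Q (x k) /\ Q (z k).
Proof.
elim: k => [|k [Qxk _]]; first by rewrite z0.
have Qz1 := (z_step k).1; split => //.
by rewrite x_def; exact: convQ Qxk Qz1 (theta01 k).
Qed.

Lemma accbpgm2_descent_step k :
  f (x k.+1) - f xstar <= (1 - theta k) * (f (x k) - f xstar)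
    + theta k `^ gamma * Ls k.+1 * (V xstar (z k) - V xstar (z k.+1)) + delta.
Proof.
have [Qxk Qzk] := accbpgm2_in_Q k; have [Qz1 z1_min] := z_step k.
have Qyk : Q (y k) by rewrite y_def; exact: convQ Qxk Qzk (theta01 k).
set t := theta k; set c := t `^ (gamma - 1) * Ls k.+1.
have t0 : 0 < t := theta_gt0 k; have L0 := Ls_gt0 k.
have tc : t * c = t `^ gamma * Ls k.+1.
  by rewrite /c mulrA mulr_powRB1 ?(ltW t0) // (lt_trans ltr01 gamma_gt1).
have split_g : g (x k.+1) (y k) = (1 - t) * g (x k) (y k) + t * g (z k.+1) (y k).
  by rewrite x_def; exact: g_affine.
have three : g (z k.+1) (y k) + c * V (z k.+1) (z k) + c * V xstar (z k.+1)
    <= g xstar (y k) + c * V xstar (z k).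
  exact: V_prox (g_affine (y k)) (mulr_gt0 (powR_gt0 _ _) L0) Qz1 z1_min _ Qxstar.
have scaled : Ls k.+1 * V (x k.+1) (y k) <= t * c * V (z k.+1) (z k).
  rewrite tc (mulrC _ (Ls _)) -mulrA ler_wpM2l ?(ltW L0) // x_def y_def.
  exact: V_scaling.
have gx : (1 - t) * g (x k) (y k) <= (1 - t) * f (x k).
  by rewrite ler_wpM2l ?g_le_f // subr_ge0 acc_theta_le1.
have gs : t * g xstar (y k) <= t * f xstar by rewrite ler_wpM2l ?g_le_f // ltW.
have three_t := ler_wpM2l (ltW t0) three.
have := descent k; rewrite -tc; lra.
Qed.

Lemma accbpgm2_rate m :
  f (x m.+1) - f xstar
  <= theta m `^ gamma * Ls m.+1 * V xstar (x 0%N) + (m%:R * (2 * L) + 1) * delta.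
Proof.
have w_gt0 k : 0 < theta k `^ gamma * Ls k.+1 by rewrite mulr_gt0 ?powR_gt0.
have E_ge0 k : 0 <= f (x k) - f xstar.
  by rewrite subr_ge0 xstar_min //; exact: (accbpgm2_in_Q k).1.
have w_succ k : (1 - theta k.+1) * (theta k `^ gamma * Ls k.+1)
    <= theta k.+1 `^ gamma * Ls k.+2.
  by apply: acc_weight_succ; rewrite // (ltW (Ls_gt0 k)) Ls_mono.
have Vz_ge0 k : 0 <= V xstar (z k) by apply: V_ge0 => //; exact: (accbpgm2_in_Q k).2.
have w_ratio i : (i < m)%N ->
    theta m `^ gamma * Ls m.+1 <= 2 * L * (theta i `^ gamma * Ls i.+1).
  by move=> im; apply: acc_weight_le; rewrite // (ltW (Ls_gt0 m)) ltW.
rewrite -z0; exact: (acc_rate (E := fun k => f (x k) - f xstar)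
  (V := fun k => V xstar (z k)) (w := fun k => theta k `^ gamma * Ls k.+1)
  (acc_theta0 gamma_gt1) (acc_theta_le1 gamma_gt1) w_gt0 E_ge0 accbpgm2_descent_step
  w_succ delta_ge0 Vz_ge0 w_ratio).
Qed.

End AccBPGM2.

Unset Implicit Arguments. Set Strict Implicit.

Theorem theorem3 (R : realType) (n : nat) (nrm : 'rV[R]_n -> R) (Q : set 'rV[R]_n)
  (f d : 'rV[R]_n -> R) (L gamma delta : R)
  (fdel : 'rV[R]_n -> R) (gdel : 'rV[R]_n -> 'rV[R]_n)
  (x y z : nat -> 'rV[R]_n) (Ls : nat -> R) (xstar : 'rV[R]_n) :
  is_norm nrm ->
  closed Q -> pc_convex_set Q ->
  pc_convex_fun Q f ->
  (exists U : set 'rV[R]_n, [/\ open U, rint Q `<=` U &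
       forall u, U u -> differentiable f u]) ->
  (forall u, Q u -> differentiable d u) ->
  (forall v, {within Q, continuous (fun u => 'd d u v)}) ->
  pc_strongly_convex1 nrm Q d ->
  1 < gamma <= 2 -> 0 < delta ->
  (forall u w, rint Q u -> Q w ->
     f w <= f u + 'd f u (w - u) + L * bregman d w u) ->
  (forall u w w' (t : R), Q u -> Q w -> Q w' -> 0 <= t <= 1 ->
     bregman d ((1 - t) *: u + t *: w) ((1 - t) *: u + t *: w')
       <= t `^ gamma * bregman d w w') ->
  (forall u w, Q u -> Q w ->
     0 <= f w - (fdel u + pairing (gdel u) (w - u)) <= L * bregman d w u + delta) ->
  let theta := fun k : nat => gamma / (k%:R + gamma) in
  let g := fun (w u : 'rV[R]_n) => fdel u + pairing (gdel u) (w - u) in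
  rint Q (x 0%N) -> z 0%N = x 0%N ->
  (forall k : nat, y k = (1 - theta k) *: x k + theta k *: z k) ->
  (forall k : nat, Q (z k.+1) /\
     forall w, Q w ->
       g (z k.+1) (y k) + theta k `^ (gamma - 1) * Ls k.+1 * bregman d (z k.+1) (z k)
       <= g w (y k) + theta k `^ (gamma - 1) * Ls k.+1 * bregman d w (z k)) ->
  (forall k : nat, x k.+1 = (1 - theta k) *: x k + theta k *: z k.+1) ->
  (forall k : nat, 0 < Ls k.+1) ->
  (forall k : nat, Ls k.+1 <= Ls k.+2) ->
  (forall k : nat, (theta k.+1 / theta k) `^ gamma <= Ls k.+1) ->
  (forall k : nat,
     f (x k.+1) <= g (x k.+1) (y k) + Ls k.+1 * bregman d (x k.+1) (y k) + delta) ->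
  (forall k : nat, Ls k.+1 < 2 * L) ->
  Q xstar -> (forall w, Q w -> f xstar <= f w) ->
  forall N : nat, (1 <= N)%N ->
    f (x N) - f xstar <=
      2 * L * (gamma / (gamma + N%:R - 1)) `^ gamma * bregman d xstar (x 0%N)
      + (2 * (N%:R - 1) * L + 1) * delta.
Proof.
move=> _ _ convQ _ _ dQ _ sc /andP[gamma_gt1 _] delta_gt0 _ scaling oracle theta g
  [Qx0 _] z0 y_def z_step x_def Ls_gt0 Ls_mono Ls_ratio descent Ls_lt Qxstar
  xstar_min [//|m] _.
have V_ge0 u w : Q u -> Q w -> 0 <= bregman d w u.
  exact: bregman_ge0 (strongly_convex1_convex sc) dQ.
have prox h c zk z' := @bregman_prox_three_point R n Q d h c zk z' convQ dQ.
have g_affine u : is_affine (g ^~ u) := affine_pairing (fdel u) (gdel u) u.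
have g_le_f u w : Q u -> Q w -> g w u <= f w.
  by move=> Qu Qw; have /andP[+ _] := oracle u w Qu Qw; rewrite subr_ge0.
apply: (le_trans (accbpgm2_rate convQ V_ge0 scaling prox g_affine g_le_f gamma_gt1
  (ltW delta_gt0) Qx0 z0 y_def z_step x_def Ls_gt0 Ls_mono Ls_ratio Ls_lt descent
  Qxstar xstar_min m)).
have -> : gamma / (gamma + m.+1%:R - 1) = theta m.
  by rewrite /theta -natr1; congr (_ / _); ring.
have -> : m.+1%:R - 1 = m%:R :> R by rewrite -natr1 addrK.
apply: lerD; last lra.
apply: ler_wpM2r; first exact: V_ge0.
by rewrite mulrC ler_wpM2r ?powR_ge0 // ltW.
Qed.
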